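(* Let $\mathcal{X},\mathcal{Y}$ be finite sets, $P_X$ a probability distribution on $\mathcal{X}$, $d:\mathcal{X}\times\mathcal{Y}\to[0,\infty)$, and $z\in(0,1]$. Then the map $Q_Y\mapsto\tilde D(z,Q_Y)$ is convex on the set of probability distributions on $\mathcal{Y}$.
   Context: $p_{c,x,y,u}=Q_Y\{y': d(x,y')<d(x,y)\}+u\cdot Q_Y\{y': d(x,y')=d(x,y)\}$; $\tilde D(z,Q_Y)=z^{-1}\mathbb{E}[d(X,Y)\mathbf{1}\{p_{c,X,Y,U}\le z\}]$ with $X\sim P_X$, $Y\sim Q_Y$, $U$ uniform on $[0,1]$ independent. *)

From HB Require Import structures.
From mathcomp Require Import all_boot all_order all_algebra.
From mathcomp Require Import all_classical all_reals all_analysis.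
Set Implicit Arguments. Unset Strict Implicit. Unset Printing Implicit Defensive.
Import Order.TTheory GRing.Theory Num.Theory.
Local Open Scope classical_set_scope.
Local Open Scope ring_scope.

Definition is_pmf (R : realType) (T : finType) (P : {ffun T -> R}) : Prop :=
  (forall t, 0 <= P t) /\ \sum_(t : T) P t = 1.

Definition pcxyu (R : realType) (X Y : finType) (d : X -> Y -> R)
  (Q : {ffun Y -> R}) (x : X) (y : Y) (u : R) : R :=
  \sum_(y' | d x y' < d x y) Q y' + u * \sum_(y' | d x y' == d x y) Q y'.

(* Pr_U[p_{c,x,y,U} <= z] for U uniform on [0,1] (Lebesgue measure) *)
Definition probU (R : realType) (X Y : finType) (d : X -> Y -> R)
  (Q : {ffun Y -> R}) (x : X) (y : Y) (z : R) : R :=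
  fine (@lebesgue_measure R
          (`[0%R, 1%R] `&` [set u : R | pcxyu d Q x y u <= z])).

(* \tilde D(z,Q_Y) = z^{-1} E[d(X,Y) 1{p_{c,X,Y,U} <= z}],
   X ~ P_X, Y ~ Q_Y, U ~ Unif[0,1], independent *)
Definition Dtilde (R : realType) (X Y : finType) (P : {ffun X -> R})
  (d : X -> Y -> R) (z : R) (Q : {ffun Y -> R}) : R :=
  z^-1 * \sum_(x : X) \sum_(y : Y) P x * Q y * d x y * probU d Q x y z.

Definition mixture (R : realType) (Y : finType) (t : R) (Q1 Q2 : {ffun Y -> R})
  : {ffun Y -> R} := [ffun y => t * Q1 y + (1 - t) * Q2 y].

(* For fixed x, the inner sum  sum_y Q(y) Pr_U[p_{c,x,y,U} <= z] d(x,y)  equals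
   sum_y m_Q(y) d(x,y), where m_Q spends a budget z on the mass of Q in increasing
   order of d(x,.), each tie level being filled in proportion to Q: Pr_U[...] is the
   fraction of the level of y that fits in the budget, and these fractions telescope
   to sum_y m_Q(y) = min(1, z).  By the bathtub principle m_Q minimises
   sum_y nu(y) d(x,y) over all 0 <= nu <= Q of total mass min(1, z).  For a mixture
   Q_t = t Q1 + (1-t) Q2 the vector t m_Q1 + (1-t) m_Q2 is such a nu, so the minimum
   is convex in Q, and so is its P_X-average. *)

From HB Require Import structures.
From mathcomp Require Import all_boot all_order all_algebra.
From mathcomp Require Import all_classical all_reals all_analysis.
From mathcomp Require Import ring.
Set Implicit Arguments. Unset Strict Implicit. Unset Printing Implicit Defensive.
Import Order.TTheory GRing.Theory Num.Theory.
Local Open Scope ring_scope.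

Section LevelMasses.
Variables (R : realType) (T : finType) (w e : T -> R).

Definition mass_lt (A : {set T}) y := \sum_(y' in A | e y' < e y) w y'.
Definition mass_eq (A : {set T}) y := \sum_(y' in A | e y' == e y) w y'.

Lemma mass_lt_restrict (A : {set T}) (M : R) y : e y < M ->
  mass_lt A y = mass_lt [set y' in A | e y' < M] y.
Proof.
move=> yM; apply: eq_bigl => y'; rewrite inE -andbA; congr (_ && _).
by rewrite andb_idl // => /lt_trans; apply.
Qed.

Lemma mass_eq_restrict (A : {set T}) (M : R) y : e y < M ->
  mass_eq A y = mass_eq [set y' in A | e y' < M] y.
Proof.
move=> yM; apply: eq_bigl => y'; rewrite inE -andbA; congr (_ && _).
by rewrite andb_idl // => /eqP->.
Qed.

Lemma telescope_levels (phi : R -> R) (A : {set T}) : phi 0 = 0 ->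
  \sum_(y in A) w y / mass_eq A y * (phi (mass_lt A y + mass_eq A y) - phi (mass_lt A y))
  = phi (\sum_(y in A) w y).
Proof.
(* Induction on #|A|, peeling off the top level {y in A | e y = max_A e}. *)
move=> phi0; move: {2}#|A| (leqnn #|A|) => n; elim: n A => [|n IHn] A.
  by rewrite leqn0 cards_eq0 => /eqP->; rewrite !big_set0.
have [->|[y0 y0A]] := set_0Vmem A; first by rewrite !big_set0.
have [ym ymA ymax] := @arg_maxP _ _ _ y0 (mem A) e y0A.
set M := e ym; set A' := [set y in A | e y < M]; move=> cardA.
have cardA' : (#|A'| <= n)%N.
  rewrite -ltnS (leq_trans _ cardA) // proper_card //; apply/fintype.properP; split.
    by apply/fintype.subsetP => y; rewrite inE => /andP[].
  by exists ym; rewrite // inE ltxx andbF.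
have top y : y \in A -> ~~ (e y < M) -> e y = M.
  by move=> yA; rewrite -leNgt => My; apply/eqP; rewrite eq_le My andbT; exact: ymax.
set S' := \sum_(y in A') w y; set G := \sum_(y in A | e y == M) w y.
have mass_top y : y \in A -> ~~ (e y < M) -> mass_lt A y = S' /\ mass_eq A y = G.
  move=> yA /(top _ yA) ey; rewrite /mass_lt /mass_eq ey; split=> //.
  by apply: eq_bigl => y'; rewrite inE.
have sumA : \sum_(y in A) w y = S' + G.
  rewrite (bigID (fun y => e y < M)) /=; congr (_ + _).
    by apply: eq_bigl => y; rewrite inE.
  apply: eq_bigl => y; apply: andb_id2l => yA.
  by apply/idP/eqP => [/(top _ yA)|->]; rewrite ?ltxx.
rewrite (bigID (fun y => e y < M)) /= sumA.
have -> : \sum_(y in A | e y < M)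
    w y / mass_eq A y * (phi (mass_lt A y + mass_eq A y) - phi (mass_lt A y)) = phi S'.
  rewrite -(IHn A' cardA'); apply: eq_big => [y|y /andP[_ yM]]; first by rewrite inE.
  by rewrite (mass_lt_restrict A yM) (mass_eq_restrict A yM).
have -> : \sum_(y in A | ~~ (e y < M))
    w y / mass_eq A y * (phi (mass_lt A y + mass_eq A y) - phi (mass_lt A y))
    = G / G * (phi (S' + G) - phi S').
  rewrite {1 2}/G !big_distrl /=; apply: eq_big => [y|y /andP[yA yM]].
    by apply: andb_id2l => yA; apply/idP/eqP => [/(top _ yA)|->]; rewrite ?ltxx.
  by have [-> ->] := mass_top y yA yM.
have [->|G0] := eqVneq G 0; first by rewrite mul0r mul0r addr0 addr0.
by rewrite divff // mul1r addrC subrK.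
Qed.

Lemma mass_lt_add_eq (A : {set T}) y :
  mass_lt A y + mass_eq A y = \sum_(y' in A | e y' <= e y) w y'.
Proof.
rewrite [RHS](bigID (fun y' => e y' < e y)) /=; congr (_ + _); apply: eq_bigl => y'.
  by rewrite -andbA; congr (_ && _); rewrite andb_idl // => /ltW.
by rewrite -andbA -leNgt -eq_le.
Qed.

Lemma mass_lt_add_eq_le (A : {set T}) y y' : (forall y, 0 <= w y) ->
  e y < e y' -> mass_lt A y + mass_eq A y <= mass_lt A y'.
Proof.
move=> w_ge0 lt_yy'; rewrite mass_lt_add_eq [X in _ <= X](bigID (fun i => e i <= e y)) /=.
rewrite (eq_bigl (fun i => (i \in A) && (e i < e y') && (e i <= e y))) ?lerDl ?sumr_ge0 //.
move=> i; rewrite -andbA; congr (_ && _).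
by rewrite andb_idl // => /le_lt_trans; apply.
Qed.

Lemma le_mass_eq (A : {set T}) y : (forall y, 0 <= w y) -> y \in A -> w y <= mass_eq A y.
Proof.
by move=> w_ge0 yA; rewrite /mass_eq (bigD1 y) ?yA ?eqxx //= lerDl sumr_ge0.
Qed.

End LevelMasses.

Section LevelFill.
Variable R : realFieldType.
Implicit Types F G z : R.

Definition level_fill z F G := (Num.min (F + G) z - Num.min F z) / G.

Lemma level_fill_eq0 z F G : 0 <= G -> z <= F -> level_fill z F G = 0.
Proof.
move=> G0 zF; rewrite /level_fill !min_r ?subrr ?mul0r //.
by rewrite (le_trans zF) // lerDl.
Qed.

Lemma level_fill_eq1 z F G : 0 < G -> F + G <= z -> level_fill z F G = 1.
Proof.
move=> G0 FGz; have Fz : F <= z by rewrite (le_trans _ FGz) // lerDl ltW.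
by rewrite /level_fill !min_l // addrAC subrr add0r divff ?gt_eqF.
Qed.

Lemma level_fill_mid z F G : 0 < G -> F <= z <= F + G -> level_fill z F G = (z - F) / G.
Proof. by move=> G0 /andP[Fz zFG]; rewrite /level_fill min_r ?min_l. Qed.

Lemma level_fill_ge0 z F G : 0 < G -> 0 <= level_fill z F G.
Proof.
move=> G0; have [zF|Fz] := leP z F; first by rewrite level_fill_eq0 ?(ltW G0).
have [FGz|zFG] := leP (F + G) z; first by rewrite level_fill_eq1 ?ler01.
by rewrite level_fill_mid ?(ltW Fz) ?(ltW zFG) // divr_ge0 ?subr_ge0 ?(ltW Fz) ?(ltW G0).
Qed.

Lemma level_fill_le1 z F G : 0 < G -> level_fill z F G <= 1.
Proof.
move=> G0; have [zF|Fz] := leP z F; first by rewrite level_fill_eq0 ?(ltW G0) ?ler01.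
have [FGz|zFG] := leP (F + G) z; first by rewrite level_fill_eq1.
by rewrite level_fill_mid ?(ltW Fz) ?(ltW zFG) // ler_pdivrMr // mul1r lerBlDl ltW.
Qed.

Lemma level_fill_lt1 z F G : 0 < G -> level_fill z F G < 1 -> z < F + G.
Proof. by move=> G0; apply: contraTT; rewrite -!leNgt => /(level_fill_eq1 G0)->. Qed.

Lemma level_fill_gt0 z F G : 0 <= G -> 0 < level_fill z F G -> F < z.
Proof. by move=> G0; apply: contraTT; rewrite -!leNgt => /(level_fill_eq0 G0)->. Qed.

End LevelFill.

Section AffineSublevel.
Local Open Scope classical_set_scope.
Variable R : realType.

Lemma lebesgue_itv_cc (a b : R) : a <= b -> fine (lebesgue_measure `[a, b]) = b - a.
Proof.
move=> ab; rewrite lebesgue_measure_itv /= lte_fin.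
by case: ltgtP ab => //= [-> _]; rewrite subrr.
Qed.

Lemma lebesgue_affine_sublevel01 (z F G : R) : 0 < G ->
  fine (lebesgue_measure (`[0, 1] `&` [set u | F + u * G <= z])) = level_fill z F G.
Proof.
move=> G0; have [zF|Fz] := ltP z F.
  rewrite level_fill_eq0 ?(ltW zF) ?(ltW G0) //.
  suff -> : `[0, 1] `&` [set u | F + u * G <= z] = set0 by rewrite measure0.
  apply/seteqP; split=> // u /= [].
  rewrite in_itv /= => /andP[u0 _]; apply/negP; rewrite -ltNge.
  by rewrite (lt_le_trans zF) // lerDl mulr_ge0 // ltW.
set c := Num.min 1 ((z - F) / G).
have c0 : 0 <= c by rewrite le_min ler01 divr_ge0 ?subr_ge0 // ltW.
have -> : `[0, 1] `&` [set u | F + u * G <= z] = `[0, c].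
  apply/seteqP; split=> u /=; rewrite !in_itv /= le_min ler_pdivlMr // lerBrDl.
    by move=> [/andP[-> ->]]; rewrite addrC.
  by move=> /andP[-> /andP[-> ?]].
rewrite lebesgue_itv_cc // subr0 /c.
have [FGz|zFG] := leP (F + G) z.
  by rewrite level_fill_eq1 // min_l // ler_pdivlMr // mul1r lerBrDl.
by rewrite level_fill_mid ?Fz ?(ltW zFG) // min_r // ler_pdivrMr // mul1r lerBlDl (ltW zFG).
Qed.

End AffineSublevel.

Lemma is_pmf_mixture (R : realType) (Y : finType) (Q1 Q2 : {ffun Y -> R}) (t : R) :
  is_pmf Q1 -> is_pmf Q2 -> 0 <= t -> t <= 1 -> is_pmf (mixture t Q1 Q2).
Proof.
move=> [Q1_ge0 sumQ1] [Q2_ge0 sumQ2] t0 t1; split=> [y|].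
  by rewrite ffunE addr_ge0 ?mulr_ge0 ?subr_ge0.
under eq_bigr do rewrite ffunE.
by rewrite big_split /= -!mulr_sumr sumQ1 sumQ2 !mulr1 addrC subrK.
Qed.

Section GreedyAllocation.
Variables (R : realType) (Y : finType) (e : Y -> R) (z : R).

Definition greedy_alloc (Q : {ffun Y -> R}) y :=
  Q y * level_fill z (mass_lt Q e [set: Y] y) (mass_eq Q e [set: Y] y).

Definition greedy_cost (Q : {ffun Y -> R}) := \sum_y greedy_alloc Q y * e y.

Lemma bathtub_le (m nu Q : Y -> R) (th : R) :
  (forall y, 0 < m y -> e y <= th) -> (forall y, m y < Q y -> th <= e y) ->
  (forall y, 0 <= nu y <= Q y) -> \sum_y nu y = \sum_y m y ->
  \sum_y m y * e y <= \sum_y nu y * e y.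
Proof.
move=> m_low m_high nu_box sum_nu.
have exchange : 0 <= \sum_y (nu y - m y) * (e y - th).
  apply: sumr_ge0 => y _; have /andP[nu0 nuQ] := nu_box y.
  case: (ltgtP (nu y) (m y)) => [nu_m|m_nu|->]; last by rewrite subrr mul0r.
    by rewrite mulr_le0 // subr_le0 ?(ltW nu_m) // m_low // (le_lt_trans nu0).
  by rewrite mulr_ge0 // subr_ge0 ?(ltW m_nu) // m_high // (lt_le_trans m_nu).
have expand : \sum_y (nu y - m y) * (e y - th) =
    \sum_y nu y * e y - \sum_y m y * e y - (\sum_y nu y - \sum_y m y) * th.
  by rewrite -!sumrB mulr_suml -sumrB; apply: eq_bigr => y _; ring.
by move: exchange; rewrite expand sum_nu subrr mul0r subr0 subr_ge0.
Qed.

Section NonnegativeWeights.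
Variable Q : {ffun Y -> R}.
Hypothesis Q_ge0 : forall y, 0 <= Q y.

Let F y := mass_lt Q e [set: Y] y.
Let G y := mass_eq Q e [set: Y] y.

Let eq0_or_gt0 y : (Q y == 0) || (0 < Q y).
Proof. by rewrite -le0r. Qed.

Lemma mass_eq_gt0 y : 0 < Q y -> 0 < G y.
Proof. by move/lt_le_trans; apply; apply: le_mass_eq (finset.in_setT y). Qed.

Lemma greedy_alloc_ge0 y : 0 <= greedy_alloc Q y.
Proof.
have /orP[/eqP Qy0|Qy_gt0] := eq0_or_gt0 y; first by rewrite /greedy_alloc Qy0 mul0r.
by rewrite mulr_ge0 ?level_fill_ge0 ?mass_eq_gt0.
Qed.

Lemma greedy_alloc_le y : greedy_alloc Q y <= Q y.
Proof.
have /orP[/eqP Qy0|Qy_gt0] := eq0_or_gt0 y; first by rewrite /greedy_alloc Qy0 mul0r.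
by rewrite ler_piMr ?level_fill_le1 ?mass_eq_gt0.
Qed.

Lemma greedy_alloc_lt y : greedy_alloc Q y < Q y -> z < F y + G y.
Proof.
have /orP[/eqP Qy0|Qy_gt0] := eq0_or_gt0 y; first by rewrite /greedy_alloc Qy0 mul0r ltxx.
by rewrite -[X in _ < X]mulr1 ltr_pM2l // => /(level_fill_lt1 (mass_eq_gt0 Qy_gt0)).
Qed.

Lemma greedy_alloc_gt0 y : 0 < greedy_alloc Q y -> F y < z.
Proof.
have /orP[/eqP Qy0|Qy_gt0] := eq0_or_gt0 y; first by rewrite /greedy_alloc Qy0 mul0r ltxx.
by rewrite pmulr_rgt0 // => /(level_fill_gt0 (ltW (mass_eq_gt0 Qy_gt0))).
Qed.

Lemma greedy_alloc_pos_le y y' :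
  0 < greedy_alloc Q y' -> greedy_alloc Q y < Q y -> e y' <= e y.
Proof.
move=> /greedy_alloc_gt0 Fy'_lt /greedy_alloc_lt lt_FGy; rewrite leNgt; apply/negP => lt_yy'.
have := lt_trans (lt_le_trans lt_FGy (mass_lt_add_eq_le _ Q_ge0 lt_yy')) Fy'_lt.
by rewrite ltxx.
Qed.

Lemma greedy_alloc_threshold : exists th,
  (forall y, 0 < greedy_alloc Q y -> e y <= th) /\
  (forall y, greedy_alloc Q y < Q y -> th <= e y).
Proof.
(* The default [min_y e y] keeps the threshold valid when nothing is allocated. *)
exists (\big[Num.max/(\big[Num.min/0]_y e y)]_(y | 0 < greedy_alloc Q y) e y).
split=> [y pos|y lt_Q]; first exact: le_bigmax_cond.
apply: bigmax_le => [|y' pos]; first exact: bigmin_le.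
exact: greedy_alloc_pos_le.
Qed.

Lemma greedy_alloc_optimal (nu : Y -> R) :
  (forall y, 0 <= nu y <= Q y) -> \sum_y nu y = \sum_y greedy_alloc Q y ->
  greedy_cost Q <= \sum_y nu y * e y.
Proof.
have [th [low high]] := greedy_alloc_threshold.
exact: bathtub_le low high.
Qed.

Lemma greedy_alloc_sum : 0 <= z -> \sum_y greedy_alloc Q y = Num.min (\sum_y Q y) z.
Proof.
move=> z_ge0; have := telescope_levels Q e [set: Y] (phi := fun s => Num.min s z) (min_l z_ge0).
have -> : \sum_(y in [set: Y]) Q y = \sum_y Q y.
  by apply: eq_bigl => y; rewrite finset.in_setT.
move=> <-; apply: eq_big => [y|y _]; first by rewrite finset.in_setT.
by rewrite /greedy_alloc /level_fill mulrA mulrAC.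
Qed.

End NonnegativeWeights.

Lemma greedy_cost_convex (Q1 Q2 : {ffun Y -> R}) (t : R) : 0 <= z ->
  is_pmf Q1 -> is_pmf Q2 -> 0 <= t -> t <= 1 ->
  greedy_cost (mixture t Q1 Q2) <= t * greedy_cost Q1 + (1 - t) * greedy_cost Q2.
Proof.
move=> z_ge0 pQ1 pQ2 t0 t1.
have [[Q1_ge0 sumQ1] [Q2_ge0 sumQ2]] := (pQ1, pQ2).
have [Qt_ge0 sumQt] := is_pmf_mixture pQ1 pQ2 t0 t1.
have t1_ge0 : 0 <= 1 - t by rewrite subr_ge0.
pose nu y := t * greedy_alloc Q1 y + (1 - t) * greedy_alloc Q2 y.
have nu_box y : 0 <= nu y <= mixture t Q1 Q2 y.
  rewrite ffunE; apply/andP; split.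
    by rewrite addr_ge0 // mulr_ge0 // greedy_alloc_ge0.
  by rewrite lerD // ler_wpM2l // greedy_alloc_le.
have sum_nu : \sum_y nu y = \sum_y greedy_alloc (mixture t Q1 Q2) y.
  rewrite big_split /= -!mulr_sumr !greedy_alloc_sum // sumQ1 sumQ2 sumQt; ring.
apply: le_trans (greedy_alloc_optimal Qt_ge0 nu_box sum_nu) _.
rewrite /greedy_cost !mulr_sumr -big_split; apply: ler_sum => y _.
by rewrite /nu mulrDl !mulrA.
Qed.

End GreedyAllocation.

Section DtildeGreedy.
Variables (R : realType) (X Y : finType) (d : X -> Y -> R) (z : R).

Lemma mul_probU (Q : {ffun Y -> R}) x y : (forall y, 0 <= Q y) ->
  Q y * probU d Q x y z = greedy_alloc (d x) z Q y.
Proof.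
move=> Q_ge0; rewrite /greedy_alloc.
have /orP[/eqP ->|Qy_gt0] : (Q y == 0) || (0 < Q y) by rewrite -le0r.
  by rewrite !mul0r.
have F_eq : \sum_(y' | d x y' < d x y) Q y' = mass_lt Q (d x) [set: Y] y.
  by apply: eq_bigl => y'; rewrite finset.in_setT.
have G_eq : \sum_(y' | d x y' == d x y) Q y' = mass_eq Q (d x) [set: Y] y.
  by apply: eq_bigl => y'; rewrite finset.in_setT.
by rewrite /probU /pcxyu F_eq G_eq lebesgue_affine_sublevel01 // mass_eq_gt0.
Qed.

Lemma Dtilde_greedy_cost (P : {ffun X -> R}) (Q : {ffun Y -> R}) :
  (forall y, 0 <= Q y) -> Dtilde P d z Q = z^-1 * \sum_x P x * greedy_cost (d x) z Q.
Proof.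
move=> Q_ge0; rewrite /Dtilde; congr (_ * _); apply: eq_bigr => x _.
rewrite mulr_sumr; apply: eq_bigr => y _; rewrite -mul_probU //; ring.
Qed.

End DtildeGreedy.

Theorem corollary3 (R : realType) (X Y : finType) (P : {ffun X -> R})
  (d : X -> Y -> R) (z : R) :
  is_pmf P -> (forall x y, 0 <= d x y) -> 0 < z -> z <= 1 ->
  forall (Q1 Q2 : {ffun Y -> R}) (t : R),
    is_pmf Q1 -> is_pmf Q2 -> 0 <= t -> t <= 1 ->
    Dtilde P d z (mixture t Q1 Q2) <=
      t * Dtilde P d z Q1 + (1 - t) * Dtilde P d z Q2.
Proof.
move=> [P_ge0 _] _ z_gt0 _ Q1 Q2 t pQ1 pQ2 t0 t1.
have [[Q1_ge0 _] [Q2_ge0 _]] := (pQ1, pQ2).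
have [Qt_ge0 _] := is_pmf_mixture pQ1 pQ2 t0 t1.
rewrite !Dtilde_greedy_cost //.
rewrite mulrCA (mulrCA (1 - t)) -mulrDr.
apply: ler_wpM2l; first by rewrite invr_ge0 ltW.
rewrite !mulr_sumr -big_split /=; apply: ler_sum => x _.
rewrite mulrCA (mulrCA (1 - t)) -mulrDr; apply: ler_wpM2l => //.
exact: greedy_cost_convex (ltW z_gt0) pQ1 pQ2 t0 t1.
Qed.
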